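(* Let $G$ be a graph with girth at least $5$ and let $S$ be an MLD-set of $G$. If $x\in S$ and $y\in V(G)\setminus S$ are such that the pair $\{x,y\}$ is not doubly resolved by $S$, then $N(y)=\{x\}$.
   Context: All graphs are finite, simple, undirected and connected; $d(u,v)$ is the shortest-path distance, $N(y)$ the open neighborhood, and the girth is the length of a shortest cycle (infinite for trees). A set $S\subseteq V(G)$ is resolving if for all distinct $x,y\in V(G)$ there is $u\in S$ with $d(u,x)\ne d(u,y)$; dominating if every vertex not in $S$ has a neighbor in $S$. An MLD-set is a set both resolving and dominating. Two vertices $u,v$ doubly resolve a pair $\{x,y\}$ if $d(u,x)-d(u,y)\ne d(v,x)-d(v,y)$; a set $S$ doubly resolves $\{x,y\}$ if some two vertices of $S$ doubly resolve it. *)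

From mathcomp Require Import all_boot all_order all_algebra.
Set Implicit Arguments. Unset Strict Implicit. Unset Printing Implicit Defensive.

Section Graph.
Variables (T : finType) (e : rel T).

Definition simple_graph : Prop := symmetric e /\ irreflexive e.
Definition connected_graph : Prop := forall u v : T, connect e u v.

Definition nbhd (y : T) : {set T} := [set z | e y z].

Fixpoint ball (n : nat) (u : T) : {set T} :=
  match n with
  | 0 => [set u]
  | n'.+1 => ball n' u :|: [set z | [exists w in ball n' u, e w z]]
  end.

(* shortest-path distance: least n with v in ball n u (for a connected graph
   this is < #|T|) *)
Definition dist (u v : T) : nat := find (fun n => v \in ball n u) (iota 0 #|T|).

Definition girth_ge5 : Prop :=
  (forall a b c : T, e a b -> e b c -> e c a -> False) /\
  (forall a b c d : T, uniq [:: a; b; c; d] ->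
      e a b -> e b c -> e c d -> e d a -> False).

Definition resolving (S : {set T}) : Prop :=
  forall x y : T, x != y -> exists2 u, u \in S & dist u x != dist u y.

Definition dominating (S : {set T}) : Prop :=
  forall v : T, v \notin S -> exists2 u, u \in S & e v u.

Definition MLD_set (S : {set T}) : Prop := resolving S /\ dominating S.

Definition doubly_resolve_by (u v x y : T) : Prop :=
  ((dist u x)%:Z - (dist u y)%:Z != (dist v x)%:Z - (dist v y)%:Z)%R.

Definition doubly_resolves (S : {set T}) (x y : T) : Prop :=
  exists u v, [/\ u \in S, v \in S & doubly_resolve_by u v x y].

End Graph.

(* If S does not doubly resolve {x, y} with x in S, then comparing every
   u in S with u = x gives d(u, y) = d(u, x) + d(x, y) throughout S.  A
   dominator of y is then at distance 0 from x, so y ~ x.  Any other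
   neighbour z of y lies outside S and has a dominator w in S with
   d(w, y) <= 2, hence d(w, x) <= 1: either w = x, closing the triangle
   x y z, or w ~ x, closing the 4-cycle x y z w. *)
From mathcomp Require Import all_boot all_order all_algebra.
From mathcomp Require Import zify.

Section Distance.
Variables (T : finType) (e : rel T).

Lemma ball_edge n (u v w : T) : v \in ball e n u -> e v w -> w \in ball e n.+1 u.
Proof.
by move=> vu vw; rewrite /= !inE; apply/orP; right; apply/existsP; exists v; rewrite vu.
Qed.

Lemma dist_le (n : nat) (u v : T) : v \in ball e n u -> dist e u v <= n.
Proof.
move=> vu; rewrite /dist; case: (ltnP n #|T|) => [lt_n|le_n].
  rewrite leqNgt; apply/negP => /(before_find 0).
  by rewrite nth_iota // add0n vu.
by apply: leq_trans (find_size _ _) _; rewrite size_iota.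
Qed.

(* [dist] is [#|T|] when [v] is unreachable from [u]; below that bound it is
   an honest ball radius. *)
Lemma mem_ball_dist (u v : T) : dist e u v < #|T| -> v \in ball e (dist e u v) u.
Proof.
move=> lt_d; have has_d : has (fun n => v \in ball e n u) (iota 0 #|T|).
  by rewrite has_find size_iota.
by have := nth_find 0 has_d; rewrite nth_iota // add0n.
Qed.

Lemma dist_self (u : T) : dist e u u = 0.
Proof. by apply/eqP; rewrite -leqn0; apply: (@dist_le 0); rewrite inE. Qed.

Lemma dist_eq0 (u v : T) : dist e u v = 0 -> v = u.
Proof.
move=> d0; have : dist e u v < #|T| by rewrite d0; apply/card_gt0P; exists u.
by move/mem_ball_dist; rewrite d0 inE => /eqP.
Qed.

Lemma dist_le1 (u v : T) : dist e u v <= 1 -> v = u \/ e u v.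
Proof.
move=> le1; case: (ltnP (dist e u v) #|T|) => [/mem_ball_dist|le_card].
  move: le1; case: (dist e u v) => [|[|//]] _ /=; first by rewrite inE => /eqP; left.
  rewrite !inE => /orP[/eqP ->|/existsP[w /andP[]]]; first by left.
  by rewrite inE => /eqP ->; right.
by left; apply: (card_le1_eqP (leq_trans le_card le1)).
Qed.

Lemma dist_edge (u v : T) : e u v -> dist e u v <= 1.
Proof. by move=> uv; apply: dist_le; apply: ball_edge uv; rewrite inE. Qed.

Lemma dist_path2 (u a v : T) : e u a -> e a v -> dist e u v <= 2.
Proof.
by move=> ua av; apply: dist_le; apply: ball_edge av; apply: ball_edge ua; rewrite inE.
Qed.

End Distance.

Lemma dist_add_of_not_doubly_resolves (T : finType) (e : rel T) (S : {set T}) (x y u : T) :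
  x \in S -> ~ doubly_resolves e S x y -> u \in S ->
  dist e u y = dist e u x + dist e x y.
Proof.
move=> xS not_dr uS.
have : ~ doubly_resolve_by e u x x y by move=> dr; apply: not_dr; exists u, x.
move/negP/negPn/eqP; rewrite dist_self; lia.
Qed.

Section NotDoublyResolved.
Variables (T : finType) (e : rel T) (S : {set T}) (x y : T).
Hypotheses (e_sym : symmetric e) (e_irr : irreflexive e) (girth5 : girth_ge5 e).
Hypotheses (S_dom : dominating e S) (xS : x \in S) (yNS : y \notin S).
Hypothesis dist_add : forall u, u \in S -> dist e u y = dist e u x + dist e x y.

Lemma dist_sym_edge {u v : T} : e v u -> dist e u v <= 1.
Proof. by rewrite e_sym; apply: dist_edge. Qed.

Lemma dist_xy_gt0 : 0 < dist e x y.
Proof. by rewrite lt0n; apply: contraNneq yNS => /dist_eq0 ->. Qed.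

Lemma edge_yx : e y x.
Proof.
have [u uS yu] := S_dom y yNS.
have := dist_sym_edge yu; rewrite dist_add // => le1.
have -> // : x = u by apply: (@dist_eq0 _ e); move: dist_xy_gt0; lia.
Qed.

Lemma dist_xy : dist e x y = 1.
Proof. by apply/eqP; rewrite eqn_leq dist_xy_gt0 (dist_sym_edge edge_yx). Qed.

Lemma nbr_y_notin {z : T} : z != x -> e y z -> z \notin S.
Proof.
move=> zx yz; apply/negP => zS.
have := dist_sym_edge yz; rewrite dist_add // dist_xy => le1.
by move: zx; rewrite (@dist_eq0 _ e z x) ?eqxx //; lia.
Qed.

Lemma nbr_y_eq_x (z : T) : e y z -> z = x.
Proof.
have [no_triangle no_square] := girth5.
move=> yz; apply/eqP; apply: contraT => zx; exfalso.
have [w wS zw] := S_dom z (nbr_y_notin zx yz).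
have : dist e w x <= 1.
  have := @dist_path2 _ e w z y; rewrite e_sym zw e_sym yz dist_add // dist_xy.
  by move=> /(_ erefl erefl); lia.
have xy : e x y by rewrite e_sym edge_yx.
case/dist_le1 => [xw|wx].
  by rewrite -xw in zw; apply: (no_triangle x y z xy yz zw).
apply: (no_square x y z w) => //.
have ne_irr a b : e a b -> a != b by apply: contraTneq => ->; rewrite e_irr.
rewrite /= !inE !negb_or (ne_irr _ _ xy) eq_sym zx (ne_irr _ _ yz) (ne_irr _ _ zw).
rewrite eq_sym (ne_irr _ _ wx) /= andbT.
by apply: contraNneq yNS => ->.
Qed.

End NotDoublyResolved.

Theorem mainTheorem9 (T : finType) (e : rel T) (S : {set T}) (x y : T) :
  simple_graph e -> connected_graph e -> girth_ge5 e ->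
  MLD_set e S -> x \in S -> y \notin S ->
  ~ doubly_resolves e S x y ->
  nbhd e y = [set x].
Proof.
(* Connectedness is not needed: the junk value of [dist] is harmless here. *)
move=> [e_sym e_irr] _ girth5 [_ S_dom] xS yNS not_dr.
have dist_add u := @dist_add_of_not_doubly_resolves T e S x y u xS not_dr.
apply/setP => z; rewrite !inE; apply/idP/eqP => [|->].
  exact: nbr_y_eq_x e_sym e_irr girth5 S_dom xS yNS dist_add z.
exact: edge_yx e_sym S_dom xS yNS dist_add.
Qed.
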